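(* Let $n\ge2$ and $0\le\delta<\frac1n$. Let $P^0=[d_1\ \cdots\ d_{n+1}]$ be the canonical uniform simplex in $\mathbb R^{n}$. Define the matrix $P^\delta$ with columns $[P^\delta]_1=d_1$ and $[P^\delta]_i=\alpha(d_i+\delta e_1)$ for $2\le i\le n+1$, where $\alpha=\frac{n}{\sqrt{n^2\delta^2-2n\delta+n^2}}$. Let $\mathcal P^\delta$ be the set of columns of $P^\delta$. Then $\mathcal P^\delta$ is a positive basis of $\mathbb R^n$ with cosine measure $\frac{1-\delta n}{\sqrt{n^2\delta^2-2n\delta+n^2}}$.
   Context: The canonical uniform simplex is the $n\times(n+1)$ matrix $P^0$ defined as follows, with $a_i=\sqrt{\frac{(n-i+1)(n+1)}{n(n-i+2)}}$ for $i=1,\dots,n$: for $1\le j\le n$, column $j$ has entry $-\frac{a_i}{n-i+1}$ in row $i<j$, entry $a_j$ in row $j$, and $0$ in rows $i>j$; column $n+1$ has entry $-\frac{a_i}{n-i+1}$ in every row $i$. $e_1$ is the first standard basis vector. A finite set $\mathcal P$ is a positive basis if its positive span $\{\sum\lambda_id_i:\lambda_i\ge0\}$ is $\mathbb R^n$ and no $d\in\mathcal P$ lies in the positive span of $\mathcal P\setminus\{d\}$. The cosine measure of a finite set $\mathcal S\subset\mathbb R^n\setminus\{\mathbf 0\}$ is $\operatorname{cm}(\mathcal S)=\min_{\|u\|=1}\max_{d\in\mathcal S}\frac{d^\top u}{\|d\|}$. *)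

From HB Require Import structures.
From mathcomp Require Import all_boot all_order all_algebra.
From mathcomp Require Import boolp classical_sets reals.
Set Implicit Arguments. Unset Strict Implicit. Unset Printing Implicit Defensive.
Import Order.TTheory GRing.Theory Num.Theory.
Local Open Scope ring_scope.
Local Open Scope classical_set_scope.

Section Defs.
Variable R : realType.

Definition dotv n (u v : 'cV[R]_n) : R := (u^T *m v) 0 0.
Definition normv n (u : 'cV[R]_n) : R := Num.sqrt (dotv u u).

(* positive span of a finite set of vectors (given as a list, read as a set) *)
Definition pspan n (s : seq 'cV[R]_n) : set 'cV[R]_n :=
  [set x | exists lam : 'I_(size s) -> R,
     (forall i, 0 <= lam i) /\ x = \sum_(i < size s) lam i *: s`_i].

Definition positive_basis n (s : seq 'cV[R]_n) : Prop :=
  pspan s = setT /\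
  forall d, d \in s -> ~ pspan [seq x <- s | x != d] d.

(* cosine measure  min_{|u|=1} max_{d in S} d^T u / |d| ; the inner max is over a
   finite set (a sup of a finite set), the outer min is taken as an infimum *)
Definition cosmeasure n (s : seq 'cV[R]_n) : R :=
  inf [set m | exists u : 'cV[R]_n, normv u = 1 /\
         m = sup [set c | exists2 d, d \in s & c = dotv d u / normv d]].

(* a_i, with 0-based row index i (paper's index i+1) *)
Definition simplex_a (n i : nat) : R :=
  Num.sqrt (((n%:R - i%:R) * (n%:R + 1)) / (n%:R * (n%:R - i%:R + 1))).

(* canonical uniform simplex P^0 (0-based indices; paper's column j+1, row i+1) *)
Definition P0 (n : nat) : 'M[R]_(n, n.+1) :=
  \matrix_(i < n, j < n.+1)
    if (j < n)%N then
      (if (i < j)%N then - simplex_a n i / (n%:R - i%:R)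
       else if (i == j :> nat) then simplex_a n j else 0)
    else - simplex_a n i / (n%:R - i%:R).

Definition e1 (n : nat) : 'cV[R]_n := \col_(i < n) ((i == 0 :> nat)%:R).

Definition alpha_delta (n : nat) (delta : R) : R :=
  n%:R / Num.sqrt (n%:R ^+ 2 * delta ^+ 2 - 2 * n%:R * delta + n%:R ^+ 2).

Definition Pdelta (n : nat) (delta : R) : 'M[R]_(n, n.+1) :=
  \matrix_(i < n, j < n.+1)
    if (j == 0 :> nat) then P0 n i j
    else alpha_delta n delta * (P0 n i j + delta * e1 n i 0).

Definition cols n m (M : 'M[R]_(n, m)) : seq 'cV[R]_n :=
  [seq col j M | j <- enum 'I_m].

End Defs.

(* The columns d_1, ..., d_(n+1) of P^0 are unit vectors with pairwise inner
   products -1/n; they sum to 0 and form a tight frame: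
   sum_j <d_j, u>^2 = (n+1)/n |u|^2.  Hence the columns p_j of P^delta are unit
   vectors that span R^n and satisfy the positive relation
   alpha (1 - n delta) p_1 + p_2 + ... + p_(n+1) = 0, so they span positively,
   and d_k separates p_k from the other columns, which gives minimality.
   The value gamma = alpha (1/n - delta) is attained at u = -d_1.  For a unit u
   the coordinates x_j = <d_j, u> satisfy sum_j x_j = 0 and
   sum_j x_j^2 = (n+1)/n; if x_1 < gamma and x_j + delta x_1 < 1/n - delta for
   all j >= 2, then for fixed x_1 the sum of the x_j^2 (j >= 2) is maximised at
   an extreme point of these constraints, where it is too small. *)

From HB Require Import structures.
From mathcomp Require Import all_boot all_order all_algebra.
From mathcomp Require Import boolp classical_sets reals.
From mathcomp Require Import ring lra.

Set Implicit Arguments.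
Unset Strict Implicit.
Unset Printing Implicit Defensive.

Import Order.TTheory GRing.Theory Num.Theory.
Local Open Scope ring_scope.

Section InnerProduct.
Variables (R : realType) (n : nat).
Implicit Types u v : 'cV[R]_n.

Lemma dotvE u v : dotv u v = \sum_i u i 0 * v i 0.
Proof. by rewrite /dotv mxE; apply: eq_bigr => i _; rewrite mxE. Qed.

Lemma dotvC u v : dotv u v = dotv v u.
Proof. by rewrite !dotvE; apply: eq_bigr => i _; rewrite mulrC. Qed.

Lemma dotvDl u1 u2 v : dotv (u1 + u2) v = dotv u1 v + dotv u2 v.
Proof. by rewrite !dotvE -big_split; apply: eq_bigr => i _; rewrite !mxE mulrDl. Qed.

Lemma dotvZl a u v : dotv (a *: u) v = a * dotv u v.
Proof. by rewrite !dotvE mulr_sumr; apply: eq_bigr => i _; rewrite !mxE mulrA. Qed.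

Lemma dotvNl u v : dotv (- u) v = - dotv u v.
Proof. by rewrite -scaleN1r dotvZl mulN1r. Qed.

Lemma dotv_suml m (F : 'I_m -> 'cV[R]_n) v :
  dotv (\sum_j F j) v = \sum_j dotv (F j) v.
Proof.
rewrite dotvE; under eq_bigr do rewrite summxE mulr_suml.
by rewrite exchange_big; apply: eq_bigr => j _; rewrite dotvE.
Qed.

Lemma dotvv_ge0 u : 0 <= dotv u u.
Proof. by rewrite dotvE; apply: sumr_ge0 => i _; rewrite -expr2 sqr_ge0. Qed.

Lemma normv_eq1 u : (normv u = 1) <-> (dotv u u = 1).
Proof.
rewrite /normv; split=> [u1|->]; last exact: sqrtr1.
by rewrite -[dotv u u]sqr_sqrtr ?dotvv_ge0 // u1 expr1n.
Qed.

End InnerProduct.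

Lemma mulmx_sum_col (R : comPzRingType) n m (M : 'M[R]_(n, m)) (v : 'cV[R]_m) :
  M *m v = \sum_j v j 0 *: col j M.
Proof.
apply/matrixP => i z; rewrite (ord1 z) !mxE summxE.
by apply: eq_bigr => j _; rewrite !mxE mulrC.
Qed.

Lemma dotv_colE (R : realType) n m (M : 'M[R]_(n, m)) j u :
  dotv (col j M) u = (M^T *m u) j 0.
Proof. by rewrite dotvE mxE; apply: eq_bigr => i _; rewrite !mxE. Qed.

Lemma not_pspan_separated (R : realType) n (s : seq 'cV[R]_n) u y :
  (forall d, d \in s -> dotv d u <= 0) -> 0 < dotv y u -> ~ pspan s y.
Proof.
move=> s_le0 y_gt0 [lam [lam_ge0 eq_y]]; move: y_gt0; rewrite eq_y dotv_suml ltNge.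
apply/negP/negPn/sumr_le0 => i _.
by rewrite dotvZl mulr_ge0_le0 // s_le0 // mem_nth.
Qed.

Section Columns.
Variables (R : realType) (n m : nat) (M : 'M[R]_(n, m)).

Lemma col_in_cols j : col j M \in cols M.
Proof. by apply/mapP; exists j; rewrite ?mem_enum. Qed.

Lemma size_cols : size (cols M) = m.
Proof. by rewrite size_map size_enum_ord. Qed.

Lemma sum_cols (F : 'I_m -> R) :
  \sum_(i < size (cols M)) F (cast_ord size_cols i) *: (cols M)`_i = \sum_j F j *: col j M.
Proof.
have nth_cols (j : 'I_m) : (cols M)`_j = col j M.
  by rewrite (nth_map j) ?size_enum_ord // nth_ord_enum.
move: (cols M) size_cols nth_cols => s e nth_s; subst m.
by apply: eq_bigr => i _; rewrite cast_ord_id nth_s.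
Qed.

End Columns.

Lemma pos_dependence_nonneg_comb (R : realFieldType) (V : lmodType R) m
    (c : 'I_m -> V) (w nu : 'I_m -> R) :
  (forall j, 0 < w j) -> \sum_j w j *: c j = 0 ->
  exists2 lam : 'I_m -> R,
    (forall j, 0 <= lam j) & \sum_j nu j *: c j = \sum_j lam j *: c j.
Proof.
move=> w_gt0 dep0; pose t := \big[Num.max/0]_k (`|nu k| / w k).
exists (fun j => nu j + t * w j) => [j|].
  have : `|nu j| / w j <= t by apply: le_bigmax.
  rewrite ler_pdivrMr // => nu_le.
  by have := ler_norm (- nu j); rewrite normrN; lra.
under [RHS]eq_bigr do rewrite scalerDl -scalerA.
by rewrite big_split /= -scaler_sumr dep0 scaler0 addr0.
Qed.

Lemma pspan_setT (R : realType) n (s : seq 'cV[R]_n) (w : 'I_(size s) -> R) :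
  (forall x, x \in <<s>>%VS) -> (forall i, 0 < w i) -> \sum_i w i *: s`_i = 0 ->
  pspan s = setT.
Proof.
move=> s_span w_gt0 dep0; apply/seteqP; split=> // x _.
have x_eq := coord_span (s_span x : x \in <<in_tuple s>>%VS).
have [lam lam_ge0 eq_lam] := pos_dependence_nonneg_comb
  (fun i => coord (in_tuple s) i x) w_gt0 dep0.
by exists lam; split; rewrite // {1}x_eq eq_lam.
Qed.

Section CosineMeasure.
Local Open Scope classical_set_scope.

Lemma cosmeasure_eq (R : realType) n (s : seq 'cV[R]_n) (g : R) :
  (forall u, normv u = 1 -> exists2 d, d \in s & g <= dotv d u / normv d) ->
  (exists2 u0, normv u0 = 1 & forall d, d \in s -> dotv d u0 / normv d <= g) ->
  cosmeasure s = g.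
Proof.
move=> lb [u0 u0_unit u0_ub].
pose S u := [set c | exists2 d, d \in s & c = dotv d u / normv d].
have sup_ge u : normv u = 1 -> g <= sup (S u).
  move=> /lb [d ds g_le]; apply: le_trans g_le _.
  apply: ub_le_sup; last by exists d.
  exists (\big[Num.max/0]_(d <- s) (dotv d u / normv d)) => _ [e es ->].
  exact: (le_bigmax_seq 0 e xpredT _ es).
have sup_u0 : sup (S u0) = g.
  apply/le_anti; rewrite sup_ge // andbT.
  apply: ge_sup => [|_ [d ds ->]]; last exact: u0_ub.
  by have [d ds _] := lb u0 u0_unit; exists (dotv d u0 / normv d), d.
apply/le_anti/andP; split.
  by apply: ge_inf; [exists g => _ [u [u1 ->]]; exact: sup_ge | exists u0; rewrite sup_u0].
by apply: lb_le_inf => [|_ [u [u1 ->]]]; [exists g, u0; rewrite sup_u0 | exact: sup_ge].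
Qed.

End CosineMeasure.

Lemma sum_sqr_le_extreme (R : realDomainType) m (y : 'I_m -> R) c :
  (forall i, y i <= c) ->
  \sum_i y i ^+ 2 <= (m%:R - 1) * c ^+ 2 + (\sum_i y i - (m%:R - 1) * c) ^+ 2.
Proof.
move=> y_le; pose w i := c - y i.
have w_ge0 i : 0 <= w i by rewrite subr_ge0.
have sum_w : \sum_i w i = m%:R * c - \sum_i y i.
  by rewrite sumrB sumr_const card_ord mulr_natl.
have sqr_w : \sum_i w i ^+ 2 <= (\sum_i w i) ^+ 2.
  rewrite [X in _ <= X]expr2 mulr_suml; apply: ler_sum => i _.
  by rewrite expr2 ler_wpM2l // (bigD1 i) //= lerDl sumr_ge0.
have -> : \sum_i y i ^+ 2 = \sum_i (c ^+ 2 - 2 * c * w i + w i ^+ 2).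
  by apply: eq_bigr => i _; rewrite /w; ring.
rewrite big_split sumrB /= sumr_const card_ord -mulr_sumr -mulr_natl.
move: sqr_w; rewrite sum_w; lra.
Qed.

Lemma extreme_sqr_sum_lt (R : realFieldType) (N d x c : R) :
  2 <= N -> 0 <= d -> N * d < 1 -> -1 < x -> x < 1 / N -> c = 1 / N - d - d * x ->
  x ^+ 2 + ((N - 1) * c ^+ 2 + (- x - (N - 1) * c) ^+ 2) < (N + 1) / N.
Proof.
move=> N2 d_ge0 Nd_lt1 x_gtN1 x_lt ->.
have N_gt0 : 0 < N by lra.
pose t := 1 - N * d.
have Nx_lt1 : N * x < 1 by move: x_lt; rewrite ltr_pdivlMr // mulrC.
have Nd_ge0 : 0 <= N * d by rewrite mulr_ge0 // ltW.
have t_ge0 : 0 <= t by rewrite /t; lra.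
have t_sqr_le1 : t ^+ 2 <= 1 by rewrite expr_le1 // /t; lra.
have bracket_lt0 : (N + 1) * (x - 1) + (N - 1) * t ^+ 2 * (1 + x) < 0.
  have : (N - 1) * t ^+ 2 * (1 + x) <= (N - 1) * (1 + x).
    by rewrite -mulrA ler_wpM2l ?ler_piMl; lra.
  lra.
rewrite -subr_lt0 -(pmulr_rlt0 _ N_gt0).
have -> : N * (x ^+ 2 + ((N - 1) * (1 / N - d - d * x) ^+ 2
      + (- x - (N - 1) * (1 / N - d - d * x)) ^+ 2) - (N + 1) / N)
    = (1 + x) * ((N + 1) * (x - 1) + (N - 1) * t ^+ 2 * (1 + x)).
  rewrite /t; field; lra.
by rewrite pmulr_rlt0 //; lra.
Qed.

Lemma exists_coord_ge (R : realFieldType) n (x : 'I_n.+1 -> R) (d : R) :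
  (2 <= n)%N -> 0 <= d -> n%:R * d < 1 -> x ord0 < 1 / n%:R ->
  \sum_j x j = 0 -> \sum_j x j ^+ 2 = (n%:R + 1) / n%:R ->
  exists i : 'I_n, 1 / n%:R - d <= x (lift ord0 i) + d * x ord0.
Proof.
move=> n2 d_ge0 nd_lt1 x0_lt sum_x sum_x2.
apply/existsP; apply: contraT; rewrite negb_exists => /forallP x_lt.
pose c := 1 / n%:R - d - d * x ord0.
pose y i := x (lift ord0 i).
have y_lt i : y i < c by move: (x_lt i); rewrite -ltNge /y /c; lra.
have sum_y : \sum_i y i = - x ord0 by move: sum_x; rewrite big_ord_recl; lra.
have n_gt0 : (0 : R) < n%:R by rewrite ltr0n (leq_trans _ n2).
have x0_gtN1 : -1 < x ord0.
  have : \sum_i y i < \sum_(i < n) c.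
    apply: ltr_sum => //; apply/hasP.
    by exists (Ordinal (leq_trans (isT : 0 < 2)%N n2)); rewrite ?mem_index_enum.
  rewrite sum_y sumr_const card_ord -mulr_natl /c.
  have -> : n%:R * (1 / n%:R - d - d * x ord0) = (1 - n%:R * d) * (1 + x ord0) - x ord0.
    by field; lra.
  by rewrite -subr_gt0 opprK addrNK pmulr_rgt0 ?subr_gt0 //; lra.
have n_ge2 : (2 : R) <= n%:R by rewrite ler_nat.
have := extreme_sqr_sum_lt n_ge2 d_ge0 nd_lt1 x0_gtN1 x0_lt erefl.
have := sum_sqr_le_extreme (fun i => ltW (y_lt i)).
rewrite sum_y -/c; move: sum_x2; rewrite big_ord_recl -/y; lra.
Qed.

Lemma sum_upper_col (V : nmodType) N j (F : nat -> V) (Y : V) : (j <= N)%N ->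
  \sum_(i < N) (if (i < j)%N then F i else if i == j :> nat then Y else 0)
  = \sum_(i < j) F i + (if (j < N)%N then Y else 0).
Proof.
elim: N => [|N IH] jN; first by move: jN; rewrite leqn0 => /eqP ->; rewrite !big_ord0 addr0.
rewrite big_ord_recr /=; case: (ltngtP j N) => [jN'|Nj|<-].
- by rewrite IH ?(ltnW jN') // jN' addr0 ltnS ltnW.
- have -> : j = N.+1 by apply/eqP; rewrite eqn_leq jN Nj.
  rewrite ltnn addr0 big_ord_recr /=; congr (_ + _).
  by apply: eq_bigr => i _; rewrite ltnS ltnW.
- rewrite ltnSn; congr (_ + _).
  by apply: eq_bigr => i _; rewrite ltn_ord.
Qed.

Lemma sum_upper_row (V : nmodType) N k (X Y : V) : (k < N)%N ->
  \sum_(j < N) (if (k < j)%N then X else if k == j :> nat then Y else 0)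
  = X *+ (N - k.+1) + Y.
Proof.
elim: N => [|N IH] // kN; rewrite big_ord_recr /=.
case: (ltnP k N) => [kN'|Nk].
  by rewrite IH // subSS -[(N - k)%N]subnSK // mulrSr addrAC.
have -> : k = N by apply/eqP; rewrite eqn_leq Nk -ltnS kN.
rewrite eqxx subnn mulr0n big1 ?add0r // => j _.
by rewrite ltnNge ltnW //= eq_sym ltn_eqF.
Qed.

Section UniformSimplex.
Variables (R : realType) (n : nat).
Hypothesis n_gt0 : (0 < n)%N.

Definition simplex_b (i : nat) : R := simplex_a R n i / (n%:R - i%:R).

Local Notation a := (simplex_a R n).
Local Notation b := simplex_b.
Local Notation P := (P0 R n).

(* [lra] and [nra] ignore section hypotheses and [Let]s, so the proofs below
   first copy the facts they need into the local context. *)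
Let n_gt0R : (0 : R) < n%:R. Proof. by rewrite ltr0n. Qed.

Let sub_gt0 i : (i < n)%N -> (0 : R) < n%:R - i%:R.
Proof. by move=> lt_in; rewrite subr_gt0 ltr_nat. Qed.

Lemma P0E (i : 'I_n) (j : 'I_n.+1) :
  P i j = if (i < j)%N then - b i else if i == j :> nat then a i else 0.
Proof.
rewrite mxE /b mulNr; case: ifP => [|/negbT]; first by case: eqP => [->|].
by rewrite -leqNgt => /(leq_trans (ltn_ord i)) ->.
Qed.

Lemma simplex_a_sqr i : (i < n)%N ->
  a i ^+ 2 = (n%:R - i%:R) * (n%:R + 1) / (n%:R * (n%:R - i%:R + 1)).
Proof.
move=> /sub_gt0 ni_gt0; have n_pos := n_gt0R.
by rewrite sqr_sqrtr // divr_ge0 // ?mulr_ge0 //; lra.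
Qed.

Lemma simplex_aE i : (i < n)%N -> a i = (n%:R - i%:R) * b i.
Proof. by move=> /sub_gt0 ni_gt0; rewrite /b mulrC divfK // gt_eqF. Qed.

Lemma simplex_b_sqr i : (i < n)%N ->
  b i ^+ 2 = (n%:R + 1) / n%:R * (1 / (n%:R - i%:R) - 1 / (n%:R - i%:R + 1)).
Proof.
move=> lt_in; have ni_gt0 := sub_gt0 lt_in; have n_pos := n_gt0R.
rewrite /b expr_div_n simplex_a_sqr //; field; lra.
Qed.

Lemma simplex_a0 : a 0 = 1.
Proof.
have n_pos := n_gt0R; have n1_pos : (0 : R) < n%:R + 1 by lra.
by rewrite /simplex_a subr0 divff ?sqrtr1 // mulf_neq0 ?lt0r_neq0.
Qed.

Lemma sum_simplex_b_sqr j : (j <= n)%N ->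
  \sum_(i < j) b i ^+ 2 = (n%:R + 1) / n%:R * (1 / (n%:R - j%:R + 1) - 1 / (n%:R + 1)).
Proof.
elim: j => [|j IH] lt_jn; first by rewrite big_ord0 subr0 subrr mulr0.
have n_pos := n_gt0R; have nj_gt0 := sub_gt0 lt_jn.
rewrite big_ord_recr /= (IH (ltnW lt_jn)) (simplex_b_sqr lt_jn) -addn1 natrD.
by field; lra.
Qed.

Lemma P0_row_sum i : \sum_j P i j = 0.
Proof.
under eq_bigr do rewrite P0E.
rewrite (sum_upper_row _ _ (leqW (ltn_ord i))) subSS mulNrn (simplex_aE (ltn_ord i)).
by rewrite -[b i *+ _]mulr_natl natrB ?addNr // ltnW.
Qed.

Lemma P0_row_dot (i k : 'I_n) :
  \sum_j P i j * P k j = if i == k then (n%:R + 1) / n%:R else 0.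
Proof.
wlog le_ik : i k / (i <= k)%N.
  move=> wlog_ik; case: (leqP i k) => [/wlog_ik //|/ltnW/wlog_ik].
  by rewrite eq_sym => <-; apply: eq_bigr => j _; rewrite mulrC.
case: (ltnP i k) => [lt_ik|le_ki].
  have -> : (i == k) = false by apply/negbTE; rewrite -val_eqE neq_ltn lt_ik.
  have row_i j : P i j * P k j = - b i * P k j.
    rewrite [P i j]P0E [P k j]P0E; case: (ltnP k j) => [lt_kj|_].
      by rewrite (ltn_trans lt_ik lt_kj).
    have [eq_kj|_] := eqVneq (k : nat) j; last by rewrite !mulr0.
    by rewrite -eq_kj lt_ik.
  by under eq_bigr do rewrite row_i; rewrite -mulr_sumr P0_row_sum mulr0.
have -> : i = k by apply/val_inj/eqP; rewrite eqn_leq le_ik le_ki.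
have sqr_entry j : P k j * P k j =
    if (k < j)%N then b k ^+ 2 else if k == j :> nat then a k ^+ 2 else 0.
  by rewrite P0E; case: ifP => _; [rewrite mulrNN expr2|case: ifP; rewrite ?expr2 ?mulr0].
under eq_bigr do rewrite sqr_entry.
have lt_kn := ltn_ord k; have nk_gt0 := sub_gt0 lt_kn; have n_pos := n_gt0R.
rewrite eqxx (sum_upper_row _ _ (leqW lt_kn)) subSS.
rewrite (simplex_b_sqr lt_kn) (simplex_a_sqr lt_kn) -[_ *+ (n - k)]mulr_natl.
by rewrite natrB; [field; lra | exact: ltnW].
Qed.

Lemma P0_mul_tr : P *m P^T = ((n%:R + 1) / n%:R)%:M.
Proof.
apply/matrixP => i k; rewrite [LHS]mxE [RHS]mxE.
by under eq_bigr do rewrite [P^T _ _]mxE; rewrite P0_row_dot; case: (i == k).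
Qed.

Lemma P0_col_dot (j k : 'I_n.+1) :
  dotv (col j P) (col k P) = if j == k then 1 else - 1 / n%:R.
Proof.
wlog le_jk : j k / (j <= k)%N.
  move=> wlog_jk; case: (leqP j k) => [/wlog_jk //|/ltnW/wlog_jk].
  by rewrite dotvC eq_sym.
have col_prod i : P i j * P i k = if (i < j)%N then b i ^+ 2
    else if i == j :> nat then a j * (if (j < k)%N then - b j else a j) else 0.
  rewrite !P0E; case: (ltnP i j) => [lt_ij|_].
    by rewrite (leq_trans lt_ij le_jk) mulrNN expr2.
  case: eqP => [eq_ij|_]; last by rewrite mul0r.
  rewrite -eq_ij; case: (ltnP i k) => // le_ki.
  by have -> : i == k :> nat by rewrite eqn_leq le_ki eq_ij le_jk.
rewrite dotvE; under eq_bigr do rewrite [col j P _ _]mxE [col k P _ _]mxE col_prod.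
have le_jn : (j <= n)%N by rewrite -ltnS.
have n_pos := n_gt0R.
rewrite (@sum_upper_col _ _ _ (fun i => b i ^+ 2) _ le_jn) (sum_simplex_b_sqr le_jn).
case: (ltnP j n) => [lt_jn|le_nj]; last first.
  have eq_jn : (j : nat) = n by apply/eqP; rewrite eqn_leq le_jn le_nj.
  have -> : j == k by rewrite -val_eqE /= eqn_leq le_jk -ltnS eq_jn ltn_ord.
  by rewrite eq_jn subrr add0r addr0; field; lra.
have nj_gt0 := sub_gt0 lt_jn.
case: (ltnP j k) => [lt_jk|le_kj].
  have -> : (j == k) = false by apply/negbTE; rewrite -val_eqE neq_ltn lt_jk.
  rewrite mulrN (simplex_aE lt_jn) -[_ * b j * b j]mulrA -expr2 (simplex_b_sqr lt_jn).
  by field; lra.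
have -> : j == k by rewrite -val_eqE eqn_leq le_jk le_kj.
by rewrite -expr2 (simplex_a_sqr lt_jn); field; lra.
Qed.

Lemma sum_col_P0 : \sum_j col j P = 0.
Proof.
apply/matrixP => i z; rewrite (ord1 z) summxE [RHS]mxE -[RHS](P0_row_sum i).
by apply: eq_bigr => j _; rewrite [col _ _ _ _]mxE.
Qed.

Lemma sum_dotv_col_P0 u : \sum_j dotv (col j P) u = 0.
Proof. by rewrite -dotv_suml sum_col_P0 dotvE big1 // => i _; rewrite mxE mul0r. Qed.

Lemma sum_sqr_dotv_col_P0 u :
  \sum_j dotv (col j P) u ^+ 2 = (n%:R + 1) / n%:R * dotv u u.
Proof.
have -> : \sum_j dotv (col j P) u ^+ 2 = dotv (P^T *m u) (P^T *m u).
  by rewrite dotvE; apply: eq_bigr => j _; rewrite dotv_colE expr2.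
rewrite /dotv trmx_mul trmxK mulmxA -(mulmxA u^T) P0_mul_tr mul_mx_scalar.
by rewrite -scalemxAl mxE.
Qed.

Lemma P0_frame_expansion u :
  u = \sum_j (n%:R / (n%:R + 1) * dotv (col j P) u) *: col j P.
Proof.
have n_pos := n_gt0R.
under eq_bigr do rewrite -scalerA dotv_colE.
rewrite -scaler_sumr -mulmx_sum_col mulmxA P0_mul_tr mul_scalar_mx scalerA.
by rewrite [_ * _](_ : _ = 1) ?scale1r //; field; lra.
Qed.

Lemma e1_col_P0 : e1 R n = col ord0 P.
Proof.
apply/matrixP => i z; rewrite (ord1 z) [RHS]mxE P0E mxE /=.
by case: eqP => [->|]; rewrite ?simplex_a0.
Qed.

End UniformSimplex.

Section PerturbedSimplex.
Variables (R : realType) (n : nat) (delta : R).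
Hypotheses (n_ge2 : (2 <= n)%N) (delta_ge0 : 0 <= delta) (delta_lt : delta < 1 / n%:R).

Local Notation P := (P0 R n).
Local Notation Pd := (Pdelta n delta).
Local Notation alpha := (alpha_delta n delta).

Let n_gt0 : (0 < n)%N. Proof. exact: leq_trans n_ge2. Qed.
Let n_gt0R : (0 : R) < n%:R. Proof. by rewrite ltr0n. Qed.
Let ndelta_lt1 : n%:R * delta < 1.
Proof. by move: delta_lt; rewrite ltr_pdivlMr // mulrC. Qed.

Let Q_gt0 : 0 < n%:R ^+ 2 * delta ^+ 2 - 2 * n%:R * delta + n%:R ^+ 2.
Proof.
have n_ge2R : (2 : R) <= n%:R by rewrite ler_nat.
have -> : n%:R ^+ 2 * delta ^+ 2 - 2 * n%:R * delta + n%:R ^+ 2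
    = (n%:R * delta - 1) ^+ 2 + (n%:R ^+ 2 - 1) by ring.
by have := sqr_ge0 (n%:R * delta - 1); nra.
Qed.

Lemma alpha_delta_gt0 : 0 < alpha.
Proof. by rewrite divr_gt0 ?sqrtr_gt0. Qed.

Lemma alpha_delta_sqr : alpha ^+ 2 * (1 - 2 * delta / n%:R + delta ^+ 2) = 1.
Proof.
have Q_pos := Q_gt0; have n_pos := n_gt0R.
by rewrite expr_div_n sqr_sqrtr ?ltW //; field; lra.
Qed.

Lemma alpha_delta_margin :
  (1 - delta * n%:R) / Num.sqrt (n%:R ^+ 2 * delta ^+ 2 - 2 * n%:R * delta + n%:R ^+ 2)
  = alpha * (1 / n%:R - delta).
Proof.
have sqrtQ_gt0 : 0 < Num.sqrt (n%:R ^+ 2 * delta ^+ 2 - 2 * n%:R * delta + n%:R ^+ 2).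
  by rewrite sqrtr_gt0.
have n_pos := n_gt0R; rewrite /alpha_delta; field; lra.
Qed.

Lemma alpha_delta_margin_le : alpha * (1 / n%:R - delta) <= 1 / n%:R.
Proof.
have n_pos := n_gt0R; have alpha_pos := alpha_delta_gt0.
have margin_ge0 : 0 <= alpha * (1 - n%:R * delta) by rewrite mulr_ge0 ?ltW ?subr_gt0.
suff : alpha * (1 - n%:R * delta) <= 1.
  have -> : alpha * (1 / n%:R - delta) = alpha * (1 - n%:R * delta) / n%:R by field; lra.
  by move=> le1; rewrite ler_pM2r ?invr_gt0 // mul1r.
rewrite -(expr_le1 (isT : 0 < 2)%N margin_ge0) exprMn -[X in _ <= X]alpha_delta_sqr.
rewrite ler_wpM2l ?sqr_ge0 // -subr_ge0.
have -> : 1 - 2 * delta / n%:R + delta ^+ 2 - (1 - n%:R * delta) ^+ 2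
    = delta * (n%:R ^+ 2 - 1) * (2 * (1 / n%:R) - delta) by field; lra.
have n_sqr_ge1 : (1 : R) <= n%:R ^+ 2 by rewrite exprn_ege1 // ler1n ltnW.
have inv_n_gt0 : (0 : R) < 1 / n%:R by rewrite divr_gt0.
have n_sqr_sub1 : (0 : R) <= n%:R ^+ 2 - 1 by lra.
have two_inv_sub : 0 <= 2 * (1 / n%:R) - delta by have := delta_lt; lra.
by rewrite !mulr_ge0.
Qed.

Let lift0_neq0 (i : 'I_n) : (lift ord0 i == ord0) = false.
Proof. by apply/negbTE; rewrite eq_sym neq_lift. Qed.

Lemma Pdelta_col j : col j Pd =
  if j == ord0 then col ord0 P else alpha *: (col j P + delta *: col ord0 P).
Proof.
have [->|nj0] := eqVneq j ord0; apply/matrixP => i z; rewrite (ord1 z).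
  by rewrite !mxE.
rewrite -e1_col_P0 // !mxE.
by have -> : (j == 0 :> nat) = false by exact: negbTE nj0.
Qed.

Lemma Pdelta_dotv j u : dotv (col j Pd) u = if j == ord0 then dotv (col ord0 P) u
  else alpha * (dotv (col j P) u + delta * dotv (col ord0 P) u).
Proof. by rewrite Pdelta_col; case: ifP => // _; rewrite dotvZl dotvDl dotvZl. Qed.

Lemma Pdelta_dotv_col_P0 j k : dotv (col j Pd) (col k P) =
  if j == ord0 then (if k == ord0 then 1 else - 1 / n%:R)
  else alpha * ((if j == k then 1 else - 1 / n%:R) + delta * (if k == ord0 then 1 else - 1 / n%:R)).
Proof. by rewrite Pdelta_dotv !P0_col_dot // [ord0 == k]eq_sym. Qed.

Lemma normv_col_Pdelta j : normv (col j Pd) = 1.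
Proof.
apply/normv_eq1; rewrite {1}Pdelta_col; case: ifP => [/eqP ->|nj0].
  by rewrite dotvC Pdelta_dotv_col_P0 eqxx.
rewrite dotvZl dotvDl dotvZl ![dotv (col _ P) _]dotvC !Pdelta_dotv_col_P0 nj0 !eqxx.
by rewrite -[RHS]alpha_delta_sqr; have n_pos := n_gt0R; field; lra.
Qed.

Lemma Pdelta_pos_dependence :
  \sum_j (if j == ord0 then alpha * (1 - n%:R * delta) else 1) *: col j Pd = 0.
Proof.
have := sum_col_P0 R n; rewrite big_ord_recl => /eqP.
rewrite addrC addr_eq0 => /eqP sum_lift.
rewrite big_ord_recl eqxx Pdelta_col eqxx.
under eq_bigr => i _ do rewrite lift0_neq0 Pdelta_col lift0_neq0 scale1r.
rewrite -scaler_sumr big_split /= sum_lift sumr_const card_ord scalerMnl.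
by apply/matrixP => i z; rewrite !mxE -mulr_natl; ring.
Qed.

Lemma Pdelta_span x : x \in <<cols Pd>>%VS.
Proof.
have p_in j : col j Pd \in <<cols Pd>>%VS by rewrite memv_span ?col_in_cols.
have d_in j : col j P \in <<cols Pd>>%VS.
  have [->|nj0] := eqVneq j ord0; first by have := p_in ord0; rewrite Pdelta_col eqxx.
  have -> : col j P = alpha^-1 *: col j Pd - delta *: col ord0 Pd.
    rewrite !Pdelta_col eqxx (negbTE nj0) scalerA.
    by rewrite (mulVf (lt0r_neq0 alpha_delta_gt0)) scale1r addrK.
  by rewrite rpredB ?rpredZ.
by rewrite (P0_frame_expansion n_gt0 x) rpred_sum // => j _; rewrite rpredZ.
Qed.

Lemma pspan_Pdelta : pspan (cols Pd) = setT.
Proof.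
pose w (j : 'I_n.+1) := if j == ord0 then alpha * (1 - n%:R * delta) else 1.
apply: (pspan_setT (w := fun i => w (cast_ord (size_cols Pd) i))).
- exact: Pdelta_span.
- move=> i; rewrite /w; case: ifP => _; last exact: ltr01.
  by rewrite mulr_gt0 ?alpha_delta_gt0 // subr_gt0.
- by rewrite sum_cols Pdelta_pos_dependence.
Qed.

Lemma Pdelta_separated k : exists2 u,
  0 < dotv (col k Pd) u & forall j, j != k -> dotv (col j Pd) u <= 0.
Proof.
have d_lt := delta_lt; have d_ge0 := delta_ge0.
have a_pos := alpha_delta_gt0; have inv_n_pos : 0 < 1 / n%:R :> R by rewrite divr_gt0.
have inv_n_le1 : 1 / n%:R <= 1 :> R by rewrite ler_pdivrMr // mul1r ler1n.
exists (col k P) => [|j njk]; rewrite Pdelta_dotv_col_P0 ?eqxx.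
  by case: (k == ord0); [exact: ltr01 | rewrite mulr_gt0 //; nra].
rewrite (negbTE njk); have [j0|_] := eqVneq j ord0.
  by rewrite -j0 eq_sym (negbTE njk); nra.
by case: (k == ord0); rewrite mulr_ge0_le0 ?ltW //; nra.
Qed.

Lemma Pdelta_minimal d : d \in cols Pd -> ~ pspan [seq x <- cols Pd | x != d] d.
Proof.
case/mapP => k _ ->; have [u u_pos u_sep] := Pdelta_separated k.
apply: (not_pspan_separated _ u_pos) => y; rewrite mem_filter => /andP[ne /mapP[j _ yE]].
rewrite yE in ne *.
by apply: u_sep; apply: contraNneq ne => ->.
Qed.

Lemma cosmeasure_Pdelta : cosmeasure (cols Pd) = alpha * (1 / n%:R - delta).
Proof.
have a_pos := alpha_delta_gt0; have d_lt := delta_lt.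
apply: cosmeasure_eq => [u /normv_eq1 u_unit|].
  pose x j := dotv (col j P) u.
  have [x0_ge|x0_lt] := leP (alpha * (1 / n%:R - delta)) (x ord0).
    exists (col ord0 Pd); rewrite ?col_in_cols //.
    by rewrite normv_col_Pdelta divr1 Pdelta_dotv eqxx.
  have x0_lt' : x ord0 < 1 / n%:R := lt_le_trans x0_lt alpha_delta_margin_le.
  have sum_x2 : \sum_j x j ^+ 2 = (n%:R + 1) / n%:R.
    by rewrite sum_sqr_dotv_col_P0 // u_unit mulr1.
  have [i le_i] := exists_coord_ge n_ge2 delta_ge0 ndelta_lt1 x0_lt'
    (sum_dotv_col_P0 u) sum_x2.
  exists (col (lift ord0 i) Pd); rewrite ?col_in_cols //.
  by rewrite normv_col_Pdelta divr1 Pdelta_dotv lift0_neq0 ler_pM2l.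
exists (- col ord0 P).
  by apply/normv_eq1; rewrite dotvNl dotvC dotvNl opprK P0_col_dot // eqxx.
move=> _ /mapP[j _ ->]; rewrite normv_col_Pdelta divr1 dotvC dotvNl dotvC.
rewrite Pdelta_dotv_col_P0 eqxx; case: (j == ord0).
  by have := alpha_delta_margin_le; nra.
by rewrite mulr1 -mulrN; nra.
Qed.

End PerturbedSimplex.

Theorem theorem13 (R : realType) (n : nat) (delta : R) :
  (2 <= n)%N -> 0 <= delta -> delta < 1 / n%:R ->
  positive_basis (cols (Pdelta n delta)) /\
  cosmeasure (cols (Pdelta n delta)) =
    (1 - delta * n%:R) /
      Num.sqrt (n%:R ^+ 2 * delta ^+ 2 - 2 * n%:R * delta + n%:R ^+ 2).
Proof.
move=> n_ge2 delta_ge0 delta_lt; split; first split.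
- exact: pspan_Pdelta.
- exact: Pdelta_minimal.
- by rewrite alpha_delta_margin // cosmeasure_Pdelta.
Qed.
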